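(* Consider the linearized ADM iteration described in the context, and let $L_k=L(\Omega_k,U_k,Q_k,W_k,\varepsilon^{(1)}_k,\varepsilon^{(2)}_k,Z^{(1)}_k,Z^{(2)}_k)$. Suppose that $\mu\geq\sqrt2\max\{\rho_1,\rho_2\}$. Then there exist positive values $\eta^0_U,\eta^0_Q,\eta^0_W$, depending only on the initial values, such that whenever $\eta_U>\eta^0_U$, $\eta_Q>\eta^0_Q$, $\eta_W>\eta^0_W$, the sequence $\{L_k\}_{k=1}^\infty$ is positive and decreasing, hence convergent.
   Context: Data: $X\in\mathbb{R}^{m\times n}$, $H\in\mathbb{R}^{s\times n}$, $Y\in\mathbb{R}^{c\times n}$; parameters $\lambda_1,\lambda_2,\rho_1,\rho_2,\delta_1,\delta_2,\mu>0$ and step parameters $\eta_U,\eta_Q,\eta_W>0$. Variables: $\Omega\in\mathbb{R}^{r\times m}$, $U\in\mathbb{R}^{r\times n}$, $Q\in\mathbb{R}^{s\times r}$, $W\in\mathbb{R}^{c\times s}$, $\varepsilon^{(1)},Z^{(1)}\in\mathbb{R}^{s\times n}$, $\varepsilon^{(2)},Z^{(2)}\in\mathbb{R}^{c\times n}$. Matrix norms are Frobenius norms, $\langle A,B\rangle=\mathrm{tr}(A^TB)$, $\|U\|_1=\sum_{ij}|U_{ij}|$. The Lagrangian is $L(\Omega,U,Q,W,\varepsilon^{(1)},\varepsilon^{(2)},Z^{(1)},Z^{(2)})=\frac12\|U-\Omega X\|_F^2+\lambda_1\|U\|_1+\frac{\rho_1}{2}\|\varepsilon^{(1)}\|^2+\frac{\rho_2}{2}\|\varepsilon^{(2)}\|^2+\langle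 Z^{(1)},H-QU-\varepsilon^{(1)}\rangle+\langle Z^{(2)},Y-WQU-\varepsilon^{(2)}\rangle+\frac{\mu}{2}\|H-QU-\varepsilon^{(1)}\|^2+\frac{\mu}{2}\|Y-WQU-\varepsilon^{(2)}\|^2+\frac{\delta_1}{2}\|Q\|^2+\frac{\delta_2}{2}\|W\|^2+\frac{\lambda_2}{2}\|\Omega\|^2$, and $L_s=L-\lambda_1\|U\|_1$. Let $\tau_t$ be entrywise soft thresholding, $\tau_t(x)=\mathrm{sign}(x)\max(|x|-t,0)$. Starting from an initialization $\Theta_0$, for $k=0,1,2,\dots$: $U_{k+1}=\tau_{\lambda_1/(\mu\eta_U)}\big(U_k-\frac{1}{\mu\eta_U}\nabla_U L_s(\Omega_k,U_k,Q_k,W_k,\varepsilon^{(1)}_k,\varepsilon^{(2)}_k,Z^{(1)}_k,Z^{(2)}_k)\big)$; $Q_{k+1}=Q_k-\frac{1}{\mu\eta_Q}\nabla_Q L(\Omega_k,U_{k+1},Q_k,W_k,\varepsilon^{(1)}_k,\varepsilon^{(2)}_k,Z^{(1)}_k,Z^{(2)}_k)$; $W_{k+1}=W_k-\frac{1}{\mu\eta_W}\nabla_W L(\Omega_k,U_{k+1},Q_{k+1},W_k,\varepsilon^{(1)}_k,\varepsilon^{(2)}_k,Z^{(1)}_k,Z^{(2)}_k)$; $\Omega_{k+1}=\arg\min_\Omega L(\Omega,U_{k+1},Q_{k+1},W_{k+1},\varepsilon^{(1)}_k,\varepsilon^{(2)}_k,Z^{(1)}_k,Z^{(2)}_k)$;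 $\varepsilon^{(1)}_{k+1}=\arg\min_{\varepsilon^{(1)}} L(\Omega_{k+1},U_{k+1},Q_{k+1},W_{k+1},\varepsilon^{(1)},\varepsilon^{(2)}_k,Z^{(1)}_k,Z^{(2)}_k)$; $\varepsilon^{(2)}_{k+1}=\arg\min_{\varepsilon^{(2)}} L(\Omega_{k+1},U_{k+1},Q_{k+1},W_{k+1},\varepsilon^{(1)}_{k+1},\varepsilon^{(2)},Z^{(1)}_k,Z^{(2)}_k)$; $Z^{(1)}_{k+1}=Z^{(1)}_k+\mu(H-Q_{k+1}U_{k+1}-\varepsilon^{(1)}_{k+1})$; $Z^{(2)}_{k+1}=Z^{(2)}_k+\mu(Y-W_{k+1}Q_{k+1}U_{k+1}-\varepsilon^{(2)}_{k+1})$. ''Decreasing'' means $L_{k+1}\le L_k$ for all $k\ge1$. *)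

From HB Require Import structures.
From mathcomp Require Import all_boot all_order all_algebra.
From mathcomp Require Import all_classical all_reals all_analysis.
Set Implicit Arguments. Unset Strict Implicit. Unset Printing Implicit Defensive.
Import Order.TTheory GRing.Theory Num.Theory.
Local Open Scope ring_scope.

Section LADM.
Variable R : realType.

Definition fip {p q : nat} (A B : 'M[R]_(p, q)) : R := \tr (A^T *m B).
Definition fsq {p q : nat} (A : 'M[R]_(p, q)) : R := fip A A.
Definition l1n {p q : nat} (A : 'M[R]_(p, q)) : R := \sum_i \sum_j `|A i j|.
Definition soft (t x : R) : R := Num.sg x * Num.max (`|x| - t) 0.
Definition softmx (t : R) {p q : nat} (A : 'M[R]_(p, q)) : 'M[R]_(p, q) :=
  map_mx (soft t) A.

Variables (m n r s c : nat).
Variables (X : 'M[R]_(m, n)) (H : 'M[R]_(s, n)) (Y : 'M[R]_(c, n)).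
Variables (lam1 lam2 rho1 rho2 delta1 delta2 mu : R).

Definition Ls (Om : 'M[R]_(r, m)) (U : 'M[R]_(r, n)) (Q : 'M[R]_(s, r))
  (W : 'M[R]_(c, s)) (e1 : 'M[R]_(s, n)) (e2 : 'M[R]_(c, n))
  (Z1 : 'M[R]_(s, n)) (Z2 : 'M[R]_(c, n)) : R :=
  fsq (U - Om *m X) / 2
  + rho1 / 2 * fsq e1 + rho2 / 2 * fsq e2
  + fip Z1 (H - Q *m U - e1) + fip Z2 (Y - W *m Q *m U - e2)
  + mu / 2 * fsq (H - Q *m U - e1) + mu / 2 * fsq (Y - W *m Q *m U - e2)
  + delta1 / 2 * fsq Q + delta2 / 2 * fsq W + lam2 / 2 * fsq Om.

Definition Lag Om U Q W e1 e2 Z1 Z2 : R :=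
  Ls Om U Q W e1 e2 Z1 Z2 + lam1 * l1n U.

Definition gradU_Ls (Om : 'M[R]_(r, m)) (U : 'M[R]_(r, n)) (Q : 'M[R]_(s, r))
  (W : 'M[R]_(c, s)) (e1 : 'M[R]_(s, n)) (e2 : 'M[R]_(c, n))
  (Z1 : 'M[R]_(s, n)) (Z2 : 'M[R]_(c, n)) : 'M[R]_(r, n) :=
  (U - Om *m X) - Q^T *m Z1 - mu *: (Q^T *m (H - Q *m U - e1))
  - (W *m Q)^T *m Z2 - mu *: ((W *m Q)^T *m (Y - W *m Q *m U - e2)).

Definition gradQ_L (Om : 'M[R]_(r, m)) (U : 'M[R]_(r, n)) (Q : 'M[R]_(s, r))
  (W : 'M[R]_(c, s)) (e1 : 'M[R]_(s, n)) (e2 : 'M[R]_(c, n))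
  (Z1 : 'M[R]_(s, n)) (Z2 : 'M[R]_(c, n)) : 'M[R]_(s, r) :=
  - (Z1 *m U^T) - mu *: ((H - Q *m U - e1) *m U^T)
  - W^T *m Z2 *m U^T - mu *: (W^T *m (Y - W *m Q *m U - e2) *m U^T)
  + delta1 *: Q.

Definition gradW_L (Om : 'M[R]_(r, m)) (U : 'M[R]_(r, n)) (Q : 'M[R]_(s, r))
  (W : 'M[R]_(c, s)) (e1 : 'M[R]_(s, n)) (e2 : 'M[R]_(c, n))
  (Z1 : 'M[R]_(s, n)) (Z2 : 'M[R]_(c, n)) : 'M[R]_(c, s) :=
  - (Z2 *m (Q *m U)^T) - mu *: ((Y - W *m Q *m U - e2) *m (Q *m U)^T)
  + delta2 *: W.

End LADM.

From HB Require Import structures.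
From mathcomp Require Import all_boot all_order all_algebra.
From mathcomp Require Import all_classical all_reals all_analysis.
From mathcomp Require Import ring lra.
Import Order.TTheory GRing.Theory Num.Theory.
Import numFieldNormedType.Exports.
Local Open Scope classical_set_scope.
Local Open Scope ring_scope.
Set Implicit Arguments. Unset Strict Implicit.

(* Every block update of the linearized ADM decreases L: the U-step is a proximal
   gradient step and the Q- and W-steps are gradient steps, all with inverse step sizes
   mu eta above the block Lipschitz constants on a sublevel set of L, and the Omega- and
   error-steps are exact minimizations.  The error-steps force Z_{k+1} = rho e_{k+1}, so from k = 1 on
   the dual step raises L by mu |R|^2 = rho^2 / mu |e_{k+1} - e_k|^2, which the strongly
   convex error-steps pay for as soon as 2 rho^2 <= mu^2.  Once Z = rho e with rho <= mu,
   L dominates lam1 |U|_1 + delta1/2 |Q|^2 + delta2/2 |W|^2 >= 0: this keeps the iterates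
   in a bounded set determined by the initial point (which yields the step-size
   thresholds) and bounds L_k below, so the nonincreasing L_k converge. *)

Section Frobenius.
Variable R : realType.
Implicit Types a : R.

Lemma fipE p q (A B : 'M[R]_(p, q)) : fip A B = \sum_i \sum_j A i j * B i j.
Proof.
rewrite /fip /mxtrace exchange_big /=; apply: eq_bigr => j _.
by rewrite !mxE; apply: eq_bigr => i _; rewrite !mxE.
Qed.

Lemma fipC p q (A B : 'M[R]_(p, q)) : fip A B = fip B A.
Proof. by rewrite !fipE; apply: eq_bigr => i _; apply: eq_bigr => j _; rewrite mulrC. Qed.

Lemma fipDr p q (A B C : 'M[R]_(p, q)) : fip A (B + C) = fip A B + fip A C.
Proof. by rewrite /fip mulmxDr mxtraceD. Qed.

Lemma fipDl p q (A B C : 'M[R]_(p, q)) : fip (B + C) A = fip B A + fip C A.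
Proof. by rewrite fipC fipDr !(fipC A). Qed.

Lemma fipZr p q a (A B : 'M[R]_(p, q)) : fip A (a *: B) = a * fip A B.
Proof. by rewrite /fip -scalemxAr mxtraceZ. Qed.

Lemma fipZl p q a (A B : 'M[R]_(p, q)) : fip (a *: A) B = a * fip A B.
Proof. by rewrite fipC fipZr fipC. Qed.

Lemma fipNr p q (A B : 'M[R]_(p, q)) : fip A (- B) = - fip A B.
Proof. by rewrite -scaleN1r fipZr mulN1r. Qed.

Lemma fipNl p q (A B : 'M[R]_(p, q)) : fip (- A) B = - fip A B.
Proof. by rewrite fipC fipNr fipC. Qed.

Lemma fipBr p q (A B C : 'M[R]_(p, q)) : fip A (B - C) = fip A B - fip A C.
Proof. by rewrite fipDr fipNr. Qed.

Lemma fipBl p q (A B C : 'M[R]_(p, q)) : fip (B - C) A = fip B A - fip C A.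
Proof. by rewrite fipDl fipNl. Qed.

Lemma fip0l p q (A : 'M[R]_(p, q)) : fip 0 A = 0.
Proof. by rewrite /fip trmx0 mul0mx mxtrace0. Qed.

Lemma fip_trmx_mull p q k (A : 'M[R]_(p, q)) (B : 'M[R]_(p, k)) (C : 'M[R]_(q, k)) :
  fip (A^T *m B) C = fip B (A *m C).
Proof. by rewrite /fip trmx_mul trmxK mulmxA. Qed.

Lemma fip_mul_trmxr p q k (A : 'M[R]_(p, k)) (B : 'M[R]_(q, k)) (C : 'M[R]_(p, q)) :
  fip (A *m B^T) C = fip A (C *m B).
Proof. by rewrite /fip trmx_mul trmxK -mulmxA mxtrace_mulC mulmxA. Qed.

Lemma fsqE p q (A : 'M[R]_(p, q)) : fsq A = \sum_i \sum_j A i j ^+ 2.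
Proof. by rewrite /fsq fipE; apply: eq_bigr => i _; apply: eq_bigr => j _; rewrite expr2. Qed.

Lemma fsq_ge0 p q (A : 'M[R]_(p, q)) : 0 <= fsq A.
Proof. by rewrite fsqE; apply: sumr_ge0 => i _; apply: sumr_ge0 => j _; apply: sqr_ge0. Qed.

Lemma fsq_eq0 p q (A : 'M[R]_(p, q)) : fsq A = 0 -> A = 0.
Proof.
rewrite fsqE => /psumr_eq0P row0; apply/matrixP => i j; rewrite mxE.
have /psumr_eq0P/(_ j isT) : \sum_j A i j ^+ 2 = 0.
  by apply: row0 => // i' _; apply: sumr_ge0 => j' _; apply: sqr_ge0.
by move=> /(_ (fun j' _ => sqr_ge0 _))/eqP; rewrite sqrf_eq0 => /eqP.
Qed.

Lemma fsqD p q (A B : 'M[R]_(p, q)) : fsq (A + B) = fsq A + 2 * fip A B + fsq B.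
Proof. by rewrite /fsq fipDl !fipDr (fipC B A); ring. Qed.

Lemma fsqB p q (A B : 'M[R]_(p, q)) : fsq (A - B) = fsq A - 2 * fip A B + fsq B.
Proof. by rewrite /fsq fipBl !fipBr (fipC B A); ring. Qed.

Lemma fsqZ p q a (A : 'M[R]_(p, q)) : fsq (a *: A) = a ^+ 2 * fsq A.
Proof. by rewrite /fsq fipZl fipZr; ring. Qed.

Lemma fsqN p q (A : 'M[R]_(p, q)) : fsq (- A) = fsq A.
Proof. by rewrite /fsq fipNl fipNr opprK. Qed.

Lemma fsqB_le p q (A B : 'M[R]_(p, q)) : fsq (A - B) <= 2 * fsq A + 2 * fsq B.
Proof. by have := fsq_ge0 (A + B); rewrite fsqB fsqD; lra. Qed.

(* Cauchy-Schwarz, by expanding [0 <= \sum_i (B u_i - C v_i)^2]. *)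
Lemma sum_mul_sqr_le (I : finType) (u v : I -> R) :
  (\sum_i u i * v i) ^+ 2 <= (\sum_i u i ^+ 2) * (\sum_i v i ^+ 2).
Proof.
set A := \sum_i u i ^+ 2; set B := \sum_i v i ^+ 2; set C := \sum_i u i * v i.
have B_ge0 : 0 <= B by apply: sumr_ge0 => i _; apply: sqr_ge0.
have [B0|B_neq0] := eqVneq B 0.
  have v0 i : v i = 0.
    by apply/eqP; rewrite -sqrf_eq0; apply/eqP/(psumr_eq0P _ B0) => // j _; apply: sqr_ge0.
  by rewrite /C big1 ?expr0n ?B0 ?mulr0 // => i _; rewrite v0 mulr0.
have : 0 <= \sum_i (B * u i - C * v i) ^+ 2 by apply: sumr_ge0 => i _; apply: sqr_ge0.
have -> : \sum_i (B * u i - C * v i) ^+ 2 = B * (A * B - C ^+ 2).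
  rewrite (eq_bigr (fun i => B ^+ 2 * u i ^+ 2 - 2 * B * C * (u i * v i) + C ^+ 2 * v i ^+ 2));
    last by move=> i _; ring.
  by rewrite !big_split /= sumrN -!big_distrr /= -/A -/B -/C; ring.
by rewrite pmulr_rge0 ?lt_def ?B_neq0 // subr_ge0 mulrC.
Qed.

Lemma fsq_mul_le p q k (A : 'M[R]_(p, q)) (B : 'M[R]_(q, k)) :
  fsq (A *m B) <= fsq A * fsq B.
Proof.
rewrite !fsqE (exchange_big _ _ _ _ _ (fun i j => B i j ^+ 2)) /= big_distrl /=.
apply: ler_sum => i _; rewrite big_distrr /=; apply: ler_sum => j _.
by rewrite mxE; apply: sum_mul_sqr_le.
Qed.

Lemma l1n_ge0 p q (A : 'M[R]_(p, q)) : 0 <= l1n A.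
Proof. by apply: sumr_ge0 => i _; apply: sumr_ge0. Qed.

Lemma norm_le_l1n p q (A : 'M[R]_(p, q)) i j : `|A i j| <= l1n A.
Proof.
rewrite /l1n (bigD1 i) //= (bigD1 j) //= -addrA lerDl.
by apply: addr_ge0; apply: sumr_ge0 => *; [|apply: sumr_ge0].
Qed.

Lemma half_fsq_ge0 p q a (A : 'M[R]_(p, q)) : 0 <= a -> 0 <= a / 2 * fsq A.
Proof. by move=> a_ge0; rewrite mulr_ge0 ?divr_ge0 ?fsq_ge0. Qed.

Lemma fsq_le_l1n p q (A : 'M[R]_(p, q)) : fsq A <= l1n A ^+ 2.
Proof.
rewrite fsqE expr2 {2}/l1n big_distrr /=; apply: ler_sum => i _.
rewrite big_distrr /=; apply: ler_sum => j _.
by rewrite -real_normK ?num_real // expr2 ler_wpM2r ?norm_le_l1n.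
Qed.

Lemma young_fip p q (t : R) (Z A : 'M[R]_(p, q)) :
  0 < t -> - (fsq Z / (2 * t)) <= fip Z A + t / 2 * fsq A.
Proof.
move=> t_gt0; have : 0 <= t / 2 * fsq (A + t^-1 *: Z).
  by apply: mulr_ge0; [apply: divr_ge0 => //; apply: ltW | apply: fsq_ge0].
have -> : t / 2 * fsq (A + t^-1 *: Z) = t / 2 * fsq A + fip Z A + fsq Z / (2 * t).
  by rewrite fsqD fsqZ fipZr (fipC A Z); field; rewrite gt_eqF.
lra.
Qed.

Lemma sqrt2_mul_le_sqr (x y : R) : 0 <= x -> Num.sqrt 2 * x <= y -> 2 * x ^+ 2 <= y ^+ 2.
Proof.
move=> x_ge0 le_y; have sx_ge0 := mulr_ge0 (sqrtr_ge0 2) x_ge0.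
by have := ler_pM sx_ge0 sx_ge0 le_y le_y; rewrite mulrACA -!expr2 sqr_sqrtr.
Qed.

Lemma fsq_le_of_add_scale_eq p q (mu rho K : R) (A Z e : 'M[R]_(p, q)) :
  0 < mu -> 0 < rho -> rho / 2 * fsq e <= K -> Z + mu *: A = rho *: e ->
  mu * fsq A <= 4 * (rho / mu * K + fsq Z / (2 * mu)).
Proof.
move=> mu_gt0 rho_gt0 e_le /(canRL (addKr Z)) A_eq.
have fA_le : mu ^+ 2 * fsq A <= 2 * rho ^+ 2 * fsq e + 2 * fsq Z.
  by rewrite -fsqZ A_eq addrC; apply: le_trans (fsqB_le _ _) _; rewrite fsqZ; lra.
have := ler_wpM2l (ltW rho_gt0) e_le; move: fA_le.
suff -> : mu * fsq A <= 4 * (rho / mu * K + fsq Z / (2 * mu))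
  = (mu ^+ 2 * fsq A <= 4 * rho * K + 2 * fsq Z) by lra.
rewrite -(ler_pM2l mu_gt0); congr (_ <= _); first by ring.
by field; rewrite gt_eqF.
Qed.

Lemma fsq_le_of_scale_eq p q (mu rho : R) (A B : 'M[R]_(p, q)) :
  0 < mu -> 0 <= rho -> 2 * rho ^+ 2 <= mu ^+ 2 -> mu *: A = rho *: B ->
  mu * fsq A <= (rho + mu) / 2 * fsq B.
Proof.
move=> mu_gt0 rho_ge0 rho_mu /(congr1 (@fsq R p q)); rewrite !fsqZ => AB.
have fB := fsq_ge0 B.
rewrite -(ler_pM2r mu_gt0).
have -> : mu * fsq A * mu = rho ^+ 2 * fsq B by rewrite -AB; ring.
have : rho ^+ 2 * fsq B <= mu ^+ 2 / 2 * fsq B by apply: ler_wpM2r => //; lra.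
have := half_fsq_ge0 B (mulr_ge0 rho_ge0 (ltW mu_gt0)).
have -> : (rho + mu) / 2 * fsq B * mu = mu ^+ 2 / 2 * fsq B + rho * mu / 2 * fsq B by ring.
lra.
Qed.

End Frobenius.

Section Proximal.
Variable R : realType.

Lemma soft_prox (t x u : R) : 0 <= t ->
  t * `|soft t x| + (soft t x - x) ^+ 2 / 2 <= t * `|u| + (u - x) ^+ 2 / 2.
Proof.
move=> t_ge0; rewrite /soft.
have u_le : u <= `|u| by apply: ler_norm.
have Nu_le : - u <= `|u| by rewrite -normrN ler_norm.
have := ler_wpM2l t_ge0 u_le; have := ler_wpM2l t_ge0 Nu_le => tNu tu.
have [x_ge0|x_lt0] := leP 0 x.
  rewrite (ger0_norm x_ge0); have [xt|tx] := leP (x - t) 0.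
    by rewrite mulr0 normr0; nra.
  have x_gt0 : 0 < x by lra.
  rewrite gtr0_sg // mul1r ger0_norm; last lra.
  by have := sqr_ge0 (u - x + t); nra.
rewrite (ltr0_norm x_lt0) ltr0_sg // mulN1r; have [xt|tx] := leP (- x - t) 0.
  by rewrite oppr0 normr0; nra.
rewrite normrN ger0_norm; last lra.
by have := sqr_ge0 (u - x - t); nra.
Qed.

(* Multiply [soft_prox] at [x = u - g / a] by [a] and use [a (u - x) = g]. *)
Lemma soft_prox_step (lam a g u : R) : 0 < a -> 0 <= lam ->
  lam * `|soft (lam / a) (u - a^-1 * g)| + g * (soft (lam / a) (u - a^-1 * g) - u)
  + a / 2 * (soft (lam / a) (u - a^-1 * g) - u) ^+ 2 <= lam * `|u|.
Proof.
move=> a_gt0 lam_ge0; set x := u - a^-1 * g; set v := soft _ x.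
have := soft_prox x u (divr_ge0 lam_ge0 (ltW a_gt0)); rewrite -/v.
move=> /(ler_wpM2l (ltW a_gt0)).
have -> : a * (lam / a * `|v| + (v - x) ^+ 2 / 2)
    = lam * `|v| + g * (v - u) + a / 2 * (v - u) ^+ 2 + g ^+ 2 / (2 * a).
  by rewrite /x; field; rewrite gt_eqF.
have -> : a * (lam / a * `|u| + (u - x) ^+ 2 / 2) = lam * `|u| + g ^+ 2 / (2 * a).
  by rewrite /x; field; rewrite gt_eqF.
lra.
Qed.

Lemma prox_grad_descent p q (f : 'M[R]_(p, q) -> R) (lam a : R) (x g : 'M[R]_(p, q)) :
  0 < a -> 0 <= lam -> (forall D, f (x + D) <= f x + fip g D + a / 2 * fsq D) ->
  f (softmx (lam / a) (x - a^-1 *: g)) + lam * l1n (softmx (lam / a) (x - a^-1 *: g))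
  <= f x + lam * l1n x.
Proof.
move=> a_gt0 lam_ge0 f_le; set x' := softmx _ _.
have := f_le (x' - x); rewrite subrKC.
suff : lam * l1n x' + fip g (x' - x) + a / 2 * fsq (x' - x) <= lam * l1n x by lra.
rewrite fipE fsqE /l1n !big_distrr -!big_split /=; apply: ler_sum => i _.
rewrite !big_distrr -!big_split /=; apply: ler_sum => j _.
by rewrite !mxE; apply: soft_prox_step.
Qed.

Lemma softmx0 p q (A : 'M[R]_(p, q)) : softmx 0 A = A.
Proof.
by apply/matrixP => i j; rewrite mxE /soft subr0 max_l ?normr_ge0 // -numEsg.
Qed.

Lemma grad_descent p q (f : 'M[R]_(p, q) -> R) (a : R) (x g : 'M[R]_(p, q)) :
  0 < a -> (forall D, f (x + D) <= f x + fip g D + a / 2 * fsq D) ->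
  f (x - a^-1 *: g) <= f x.
Proof.
by move=> a_gt0 /(prox_grad_descent a_gt0 (lexx 0)); rewrite mul0r softmx0 !mul0r !addr0.
Qed.

Lemma quadratic_argmin p q (f : 'M[R]_(p, q) -> R) (k : R) (x g : 'M[R]_(p, q)) :
  0 < k -> (forall D, f (x + D) = f x + fip g D + k / 2 * fsq D) ->
  (forall y, f x <= f y) -> g = 0 /\ forall y, f y = f x + k / 2 * fsq (y - x).
Proof.
move=> k_gt0 f_eq f_min.
have g0 : g = 0.
  apply: fsq_eq0; apply/eqP; rewrite eq_le fsq_ge0 andbT.
  have := f_min (x + - (k^-1 *: g)); rewrite f_eq fipNr fipZr fsqN fsqZ -/(fsq g) -addrA.
  have -> : - (k^-1 * fsq g) + k / 2 * (k^-1 ^+ 2 * fsq g) = - (fsq g / (2 * k)).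
    by field; rewrite gt_eqF.
  by rewrite lerDl oppr_ge0 pmulr_lle0 // invr_gt0 mulr_gt0.
by split => // y; rewrite -{1}(subrKC x y) f_eq g0 fip0l addr0.
Qed.

End Proximal.

Lemma subrDAC (V : zmodType) (a b d e : V) : a - (b + d) - e = a - b - e - d.
Proof. by rewrite opprD addrA (addrAC _ (- d)). Qed.

Section Lagrangian.
Variables (R : realType) (m n r s c : nat).
Variables (X : 'M[R]_(m, n)) (H : 'M[R]_(s, n)) (Y : 'M[R]_(c, n)).
Variables (lam1 lam2 rho1 rho2 delta1 delta2 mu : R).
Hypotheses (lam1_gt0 : 0 < lam1) (lam2_ge0 : 0 <= lam2) (mu_gt0 : 0 < mu).
Hypotheses (rho1_gt0 : 0 < rho1) (rho2_gt0 : 0 < rho2).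
Hypotheses (delta1_gt0 : 0 < delta1) (delta2_gt0 : 0 < delta2).

Local Notation Lsmooth := (Ls X H Y lam2 rho1 rho2 delta1 delta2 mu).
Local Notation L := (Lag X H Y lam1 lam2 rho1 rho2 delta1 delta2 mu).
Local Notation res1 Q U e1 := (H - Q *m U - e1).
Local Notation res2 W Q U e2 := (Y - W *m Q *m U - e2).

Implicit Types (Om : 'M[R]_(r, m)) (U : 'M[R]_(r, n)) (Q : 'M[R]_(s, r)) (W : 'M[R]_(c, s)).

Lemma Ls_addU Om U Q W e1 e2 Z1 Z2 (D : 'M[R]_(r, n)) :
  Lsmooth Om (U + D) Q W e1 e2 Z1 Z2 = Lsmooth Om U Q W e1 e2 Z1 Z2
  + fip (gradU_Ls X H Y mu Om U Q W e1 e2 Z1 Z2) D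
  + (fsq D + mu * fsq (Q *m D) + mu * fsq (W *m Q *m D)) / 2.
Proof.
have -> : fip (gradU_Ls X H Y mu Om U Q W e1 e2 Z1 Z2) D
    = fip (U - Om *m X) D - fip Z1 (Q *m D) - mu * fip (res1 Q U e1) (Q *m D)
      - fip Z2 (W *m Q *m D) - mu * fip (res2 W Q U e2) (W *m Q *m D).
  by rewrite /gradU_Ls !fipBl !fipZl !fip_trmx_mull !fipBl; ring.
rewrite /Ls (addrAC U D) !mulmxDr !subrDAC.
set A := U - Om *m X; set R1 := res1 Q U e1; set R2 := res2 W Q U e2; clearbody A R1 R2.
by rewrite fsqD !fsqB !fipBr; field.
Qed.

Lemma Lag_addQ Om U Q W e1 e2 Z1 Z2 (D : 'M[R]_(s, r)) :
  L Om U (Q + D) W e1 e2 Z1 Z2 = L Om U Q W e1 e2 Z1 Z2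
  + fip (gradQ_L H Y delta1 mu Om U Q W e1 e2 Z1 Z2) D
  + (mu * fsq (D *m U) + mu * fsq (W *m D *m U) + delta1 * fsq D) / 2.
Proof.
have -> : fip (gradQ_L H Y delta1 mu Om U Q W e1 e2 Z1 Z2) D
    = - fip Z1 (D *m U) - mu * fip (res1 Q U e1) (D *m U)
      - fip Z2 (W *m D *m U) - mu * fip (res2 W Q U e2) (W *m D *m U) + delta1 * fip Q D.
  rewrite /gradQ_L !(fipDl, fipNl, fipZl, fip_mul_trmxr, fip_trmx_mull) !mulmxA.
  by rewrite ?(fipDl, fipNl); ring.
rewrite /Lag /Ls mulmxDr !mulmxDl !subrDAC.
set R1 := res1 Q U e1; set R2 := res2 W Q U e2; clearbody R1 R2.
by rewrite (fsqD Q) !fsqB !fipBr; field.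
Qed.

Lemma Lag_addW Om U Q W e1 e2 Z1 Z2 (D : 'M[R]_(c, s)) :
  L Om U Q (W + D) e1 e2 Z1 Z2 = L Om U Q W e1 e2 Z1 Z2
  + fip (gradW_L Y delta2 mu Om U Q W e1 e2 Z1 Z2) D
  + (mu * fsq (D *m Q *m U) + delta2 * fsq D) / 2.
Proof.
have -> : fip (gradW_L Y delta2 mu Om U Q W e1 e2 Z1 Z2) D
    = - fip Z2 (D *m Q *m U) - mu * fip (res2 W Q U e2) (D *m Q *m U) + delta2 * fip W D.
  rewrite /gradW_L !(fipDl, fipNl, fipZl, fip_mul_trmxr) !mulmxA.
  by rewrite ?(fipDl, fipNl); ring.
rewrite /Lag /Ls !mulmxDl !subrDAC.
set R2 := res2 W Q U e2; clearbody R2.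
by rewrite (fsqD W) !fsqB !fipBr; field.
Qed.

Lemma Lag_adde1 Om U Q W e1 e2 Z1 Z2 (D : 'M[R]_(s, n)) :
  L Om U Q W (e1 + D) e2 Z1 Z2 = L Om U Q W e1 e2 Z1 Z2
  + fip (rho1 *: e1 - Z1 - mu *: res1 Q U e1) D + (rho1 + mu) / 2 * fsq D.
Proof.
rewrite /Lag /Ls opprD addrA; set R1 := res1 Q U e1; clearbody R1.
by rewrite (fsqD e1) (fsqB R1) (fipBr Z1) !fipBl !fipZl; field.
Qed.

Lemma Lag_adde2 Om U Q W e1 e2 Z1 Z2 (D : 'M[R]_(c, n)) :
  L Om U Q W e1 (e2 + D) Z1 Z2 = L Om U Q W e1 e2 Z1 Z2
  + fip (rho2 *: e2 - Z2 - mu *: res2 W Q U e2) D + (rho2 + mu) / 2 * fsq D.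
Proof.
rewrite /Lag /Ls opprD addrA; set R2 := res2 W Q U e2; clearbody R2.
by rewrite (fsqD e2) (fsqB R2) (fipBr Z2) !fipBl !fipZl; field.
Qed.

Lemma Lag_addZ Om U Q W e1 e2 Z1 Z2 :
  L Om U Q W e1 e2 (Z1 + mu *: res1 Q U e1) (Z2 + mu *: res2 W Q U e2)
  = L Om U Q W e1 e2 Z1 Z2 + mu * fsq (res1 Q U e1) + mu * fsq (res2 W Q U e2).
Proof.
rewrite /Lag /Ls; set R1 := res1 Q U e1; set R2 := res2 W Q U e2; clearbody R1 R2.
by rewrite !fipDl !fipZl; ring.
Qed.

Lemma Lag_U_update_le Om U Q W e1 e2 Z1 Z2 (a : R) :
  1 + mu * fsq Q + mu * (fsq W * fsq Q) <= a ->
  L Om (softmx (lam1 / a) (U - a^-1 *: gradU_Ls X H Y mu Om U Q W e1 e2 Z1 Z2)) Q W e1 e2 Z1 Z2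
  <= L Om U Q W e1 e2 Z1 Z2.
Proof.
move=> a_ge; have fQ := fsq_ge0 Q; have fW := fsq_ge0 W.
have muWQ : 0 <= mu * (fsq W * fsq Q) := mulr_ge0 (ltW mu_gt0) (mulr_ge0 fW fQ).
have muQ : 0 <= mu * fsq Q := mulr_ge0 (ltW mu_gt0) fQ.
rewrite /Lag; apply: (prox_grad_descent (f := fun U => Lsmooth Om U Q W e1 e2 Z1 Z2)).
- by apply: (lt_le_trans _ a_ge); lra.
- exact: ltW.
move=> D; rewrite Ls_addU lerD2l; have fD := fsq_ge0 D.
have := ler_wpM2l (ltW mu_gt0) (fsq_mul_le Q D).
have := ler_wpM2l (ltW mu_gt0)
  (le_trans (fsq_mul_le (W *m Q) D) (ler_wpM2r fD (fsq_mul_le W Q))).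
have := ler_wpM2r fD a_ge.
lra.
Qed.

Lemma Lag_Q_update_le Om U Q W e1 e2 Z1 Z2 (a : R) :
  mu * fsq U + mu * (fsq W * fsq U) + delta1 <= a ->
  L Om U (Q - a^-1 *: gradQ_L H Y delta1 mu Om U Q W e1 e2 Z1 Z2) W e1 e2 Z1 Z2
  <= L Om U Q W e1 e2 Z1 Z2.
Proof.
move=> a_ge; have fU := fsq_ge0 U; have fW := fsq_ge0 W.
have muWU : 0 <= mu * (fsq W * fsq U) := mulr_ge0 (ltW mu_gt0) (mulr_ge0 fW fU).
have muU : 0 <= mu * fsq U := mulr_ge0 (ltW mu_gt0) fU.
apply: (grad_descent (f := fun Q => L Om U Q W e1 e2 Z1 Z2)).
  by apply: (lt_le_trans _ a_ge); have := delta1_gt0; lra.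
move=> D; rewrite Lag_addQ lerD2l; have fD := fsq_ge0 D.
have := ler_wpM2l (ltW mu_gt0) (fsq_mul_le D U).
have := ler_wpM2l (ltW mu_gt0)
  (le_trans (fsq_mul_le (W *m D) U) (ler_wpM2r (fsq_ge0 U) (fsq_mul_le W D))).
have := ler_wpM2r fD a_ge.
lra.
Qed.

Lemma Lag_W_update_le Om U Q W e1 e2 Z1 Z2 (a : R) :
  mu * (fsq Q * fsq U) + delta2 <= a ->
  L Om U Q (W - a^-1 *: gradW_L Y delta2 mu Om U Q W e1 e2 Z1 Z2) e1 e2 Z1 Z2
  <= L Om U Q W e1 e2 Z1 Z2.
Proof.
move=> a_ge.
have muQU : 0 <= mu * (fsq Q * fsq U) := mulr_ge0 (ltW mu_gt0) (mulr_ge0 (fsq_ge0 Q) (fsq_ge0 U)).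
apply: (grad_descent (f := fun W => L Om U Q W e1 e2 Z1 Z2)).
  by apply: (lt_le_trans _ a_ge); have := delta2_gt0; lra.
move=> D; rewrite Lag_addW lerD2l; have fD := fsq_ge0 D.
have := ler_wpM2l (ltW mu_gt0)
  (le_trans (fsq_mul_le (D *m Q) U) (ler_wpM2r (fsq_ge0 U) (fsq_mul_le D Q))).
have := ler_wpM2r fD a_ge.
lra.
Qed.

Definition penalty U Q W := lam1 * l1n U + delta1 / 2 * fsq Q + delta2 / 2 * fsq W.

Definition dual_gap (Z1 : 'M[R]_(s, n)) (Z2 : 'M[R]_(c, n)) := (fsq Z1 + fsq Z2) / (2 * mu).

Lemma penalty_ge0 U Q W : 0 <= penalty U Q W.
Proof.
by rewrite /penalty !addr_ge0 ?half_fsq_ge0 ?mulr_ge0 ?l1n_ge0 // ltW.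
Qed.

Lemma dual_gap_ge0 (Z1 : 'M[R]_(s, n)) (Z2 : 'M[R]_(c, n)) : 0 <= dual_gap Z1 Z2.
Proof. by rewrite divr_ge0 ?addr_ge0 ?fsq_ge0 // mulr_ge0 // ltW. Qed.

Lemma Lag_coercive Om U Q W e1 e2 Z1 Z2 :
  penalty U Q W + rho1 / 2 * fsq e1 + rho2 / 2 * fsq e2
  <= L Om U Q W e1 e2 Z1 Z2 + dual_gap Z1 Z2.
Proof.
have := young_fip Z1 (res1 Q U e1) mu_gt0; have := young_fip Z2 (res2 W Q U e2) mu_gt0.
have := fsq_ge0 (U - Om *m X); have := half_fsq_ge0 Om lam2_ge0.
by rewrite /Lag /Ls /penalty /dual_gap mulrDl; lra.
Qed.

Lemma Lag_ge_penalty Om U Q W e1 e2 :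
  rho1 <= mu -> rho2 <= mu -> penalty U Q W <= L Om U Q W e1 e2 (rho1 *: e1) (rho2 *: e2).
Proof.
move=> rho1_le rho2_le; have := Lag_coercive Om U Q W e1 e2 (rho1 *: e1) (rho2 *: e2).
have gap_le (rho : R) p q (e : 'M[R]_(p, q)) :
    0 < rho -> rho <= mu -> rho ^+ 2 * fsq e / (2 * mu) <= rho / 2 * fsq e.
  move=> rho_gt0 rho_le; rewrite ler_pdivrMr ?mulr_gt0 //.
  have -> : rho / 2 * fsq e * (2 * mu) = rho * mu * fsq e by field.
  by rewrite expr2; apply/(ler_wpM2r (fsq_ge0 e))/(ler_wpM2l (ltW rho_gt0)).
have := gap_le _ _ _ e1 rho1_gt0 rho1_le; have := gap_le _ _ _ e2 rho2_gt0 rho2_le.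
by rewrite /dual_gap !fsqZ mulrDl; lra.
Qed.

Lemma penalty_le_Lag Om U Q W e1 e2 Z1 Z2 :
  penalty U Q W <= L Om U Q W e1 e2 Z1 Z2 + dual_gap Z1 Z2.
Proof.
have := Lag_coercive Om U Q W e1 e2 Z1 Z2.
have := half_fsq_ge0 e1 (ltW rho1_gt0); have := half_fsq_ge0 e2 (ltW rho2_gt0).
lra.
Qed.

Definition boundU M := (M / lam1) ^+ 2.
Definition boundQ M := 2 * M / delta1.
Definition boundW M := 2 * M / delta2.

(* Block Lipschitz constants of the smooth part at the norm bounds [boundU], [boundQ], [boundW]. *)
Definition stepU_min M := 1 + mu * boundQ M + mu * (boundW M * boundQ M).
Definition stepQ_min M := mu * boundU M + mu * (boundW M * boundU M) + delta1.
Definition stepW_min M := mu * (boundQ M * boundU M) + delta2.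

Lemma penalty_bounds U Q W M : penalty U Q W <= M ->
  [/\ fsq U <= boundU M, fsq Q <= boundQ M & fsq W <= boundW M].
Proof.
rewrite /penalty /boundU /boundQ /boundW => pen_le.
have lU := l1n_ge0 U; have fQ := fsq_ge0 Q; have fW := fsq_ge0 W.
have := mulr_ge0 (ltW lam1_gt0) lU.
have := half_fsq_ge0 Q (ltW delta1_gt0); have := half_fsq_ge0 W (ltW delta2_gt0).
move=> pW pQ pU; split; [|by rewrite ler_pdivlMr //; lra..].
have lU_le : l1n U <= M / lam1 by rewrite ler_pdivlMr // mulrC; lra.
by apply: le_trans (fsq_le_l1n U) _; rewrite !expr2; apply: ler_pM.
Qed.

Lemma step_min_gt0 M : 0 <= M -> [/\ 0 < stepU_min M, 0 < stepQ_min M & 0 < stepW_min M].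
Proof.
move=> M_ge0; have mu_ge0 := ltW mu_gt0.
have bU : 0 <= boundU M := exprn_ge0 _ (divr_ge0 M_ge0 (ltW lam1_gt0)).
have bQ : 0 <= boundQ M := divr_ge0 (mulr_ge0 (ler0n _ 2) M_ge0) (ltW delta1_gt0).
have bW : 0 <= boundW M := divr_ge0 (mulr_ge0 (ler0n _ 2) M_ge0) (ltW delta2_gt0).
rewrite /stepU_min /stepQ_min /stepW_min; split.
- by have := mulr_ge0 mu_ge0 bQ; have := mulr_ge0 mu_ge0 (mulr_ge0 bW bQ); lra.
- have := mulr_ge0 mu_ge0 bU; have := mulr_ge0 mu_ge0 (mulr_ge0 bW bU).
  by have := delta1_gt0; lra.
- by have := mulr_ge0 mu_ge0 (mulr_ge0 bQ bU); have := delta2_gt0; lra.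
Qed.

Lemma Lag_primal_update_le Om U Q W e1 e2 Z1 Z2 Om' U' Q' W' (aU aQ aW M : R) :
  (forall Om0 U0 Q0 W0, L Om0 U0 Q0 W0 e1 e2 Z1 Z2 <= L Om U Q W e1 e2 Z1 Z2 ->
     penalty U0 Q0 W0 <= M) ->
  stepU_min M <= aU -> stepQ_min M <= aQ -> stepW_min M <= aW ->
  U' = softmx (lam1 / aU) (U - aU^-1 *: gradU_Ls X H Y mu Om U Q W e1 e2 Z1 Z2) ->
  Q' = Q - aQ^-1 *: gradQ_L H Y delta1 mu Om U' Q W e1 e2 Z1 Z2 ->
  W' = W - aW^-1 *: gradW_L Y delta2 mu Om U' Q' W e1 e2 Z1 Z2 ->
  L Om' U' Q' W' e1 e2 Z1 Z2 <= L Om U' Q' W' e1 e2 Z1 Z2 ->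
  L Om' U' Q' W' e1 e2 Z1 Z2 <= L Om U Q W e1 e2 Z1 Z2.
Proof.
move=> sublevel aU_ge aQ_ge aW_ge U'_def Q'_def W'_def Om'_le.
have bounds Om0 U0 Q0 W0 (h : L Om0 U0 Q0 W0 e1 e2 Z1 Z2 <= L Om U Q W e1 e2 Z1 Z2) :=
  penalty_bounds (sublevel _ _ _ _ h).
have mu_ge0 := ltW mu_gt0.
have [_ bQ bW] := bounds _ _ _ _ (lexx _).
have U_le : L Om U' Q W e1 e2 Z1 Z2 <= L Om U Q W e1 e2 Z1 Z2.
  rewrite U'_def; apply: Lag_U_update_le; apply: le_trans aU_ge.
  exact: lerD (lerD (lexx 1) (ler_wpM2l mu_ge0 bQ))
    (ler_wpM2l mu_ge0 (ler_pM (fsq_ge0 W) (fsq_ge0 Q) bW bQ)).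
have [bU' _ _] := bounds _ _ _ _ U_le.
have Q_le : L Om U' Q' W e1 e2 Z1 Z2 <= L Om U Q W e1 e2 Z1 Z2.
  apply: le_trans U_le; rewrite Q'_def; apply: Lag_Q_update_le; apply: le_trans aQ_ge.
  exact: lerD (lerD (ler_wpM2l mu_ge0 bU')
    (ler_wpM2l mu_ge0 (ler_pM (fsq_ge0 W) (fsq_ge0 U') bW bU'))) (lexx _).
have [_ bQ' _] := bounds _ _ _ _ Q_le.
apply: le_trans Om'_le (le_trans _ Q_le); rewrite W'_def; apply: Lag_W_update_le.
apply: le_trans aW_ge.
exact: lerD (ler_wpM2l mu_ge0 (ler_pM (fsq_ge0 Q') (fsq_ge0 U') bQ' bU')) (lexx _).
Qed.

Lemma Lag_error_dual_update Om U Q W e1 e2 Z1 Z2 e1' e2' Z1' Z2' :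
  (forall e, L Om U Q W e1' e2 Z1 Z2 <= L Om U Q W e e2 Z1 Z2) ->
  (forall e, L Om U Q W e1' e2' Z1 Z2 <= L Om U Q W e1' e Z1 Z2) ->
  Z1' = Z1 + mu *: res1 Q U e1' -> Z2' = Z2 + mu *: res2 W Q U e2' ->
  [/\ Z1' = rho1 *: e1', Z2' = rho2 *: e2',
      L Om U Q W e1' e2' Z1 Z2 + (rho1 + mu) / 2 * fsq (e1 - e1')
        + (rho2 + mu) / 2 * fsq (e2 - e2') = L Om U Q W e1 e2 Z1 Z2
    & L Om U Q W e1' e2' Z1' Z2'
      = L Om U Q W e1' e2' Z1 Z2 + mu * fsq (res1 Q U e1') + mu * fsq (res2 W Q U e2')].
Proof.
move=> e1'_min e2'_min -> ->.
have [g1 e1_eq] := quadratic_argmin (f := fun e => L Om U Q W e e2 Z1 Z2)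
  (addr_gt0 rho1_gt0 mu_gt0) (Lag_adde1 Om U Q W e1' e2 Z1 Z2) e1'_min.
have [g2 e2_eq] := quadratic_argmin (f := fun e => L Om U Q W e1' e Z1 Z2)
  (addr_gt0 rho2_gt0 mu_gt0) (Lag_adde2 Om U Q W e1' e2' Z1 Z2) e2'_min.
split; last exact: Lag_addZ.
- by move/subr0_eq: g1 => <-; rewrite subrKC.
- by move/subr0_eq: g2 => <-; rewrite subrKC.
- by rewrite /= in e1_eq e2_eq; rewrite (e1_eq e1) (e2_eq e2); lra.
Qed.

(* [L_1] is not below [L_0] in general, since [Z_0] need not equal [rho e_0]; this
   level bounds [L_1], and hence every later iterate. *)
Definition init_level Om U Q W e1 e2 Z1 Z2 :=
  let K := L Om U Q W e1 e2 Z1 Z2 + dual_gap Z1 Z2 in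
  K + 4 * ((rho1 + rho2) / mu * K + dual_gap Z1 Z2).

Lemma init_level_ge Om U Q W e1 e2 Z1 Z2 :
  0 <= L Om U Q W e1 e2 Z1 Z2 + dual_gap Z1 Z2 <= init_level Om U Q W e1 e2 Z1 Z2.
Proof.
have K_ge0 := le_trans (penalty_ge0 U Q W) (penalty_le_Lag Om U Q W e1 e2 Z1 Z2).
rewrite K_ge0 /init_level lerDl mulr_ge0 // addr_ge0 ?dual_gap_ge0 //.
by rewrite mulr_ge0 // divr_ge0 ?addr_ge0 ?ltW.
Qed.

Hypotheses (rho1_mu : 2 * rho1 ^+ 2 <= mu ^+ 2) (rho2_mu : 2 * rho2 ^+ 2 <= mu ^+ 2).

Let rho1_le_mu : rho1 <= mu. Proof. by move: mu_gt0 rho1_gt0 rho1_mu; nra. Qed.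
Let rho2_le_mu : rho2 <= mu. Proof. by move: mu_gt0 rho2_gt0 rho2_mu; nra. Qed.

Variables (etaU etaQ etaW : R).
Variables (Om_ : nat -> 'M[R]_(r, m)) (U_ : nat -> 'M[R]_(r, n)).
Variables (Q_ : nat -> 'M[R]_(s, r)) (W_ : nat -> 'M[R]_(c, s)).
Variables (e1_ Z1_ : nat -> 'M[R]_(s, n)) (e2_ Z2_ : nat -> 'M[R]_(c, n)).

Local Notation L_ k := (L (Om_ k) (U_ k) (Q_ k) (W_ k) (e1_ k) (e2_ k) (Z1_ k) (Z2_ k)).
Let M := init_level (Om_ 0) (U_ 0) (Q_ 0) (W_ 0) (e1_ 0) (e2_ 0) (Z1_ 0) (Z2_ 0).

Hypotheses (etaU_gt : stepU_min M / mu < etaU) (etaQ_gt : stepQ_min M / mu < etaQ).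
Hypothesis (etaW_gt : stepW_min M / mu < etaW).
Hypothesis U_update : forall k, U_ k.+1 = softmx (lam1 / (mu * etaU))
  (U_ k - (mu * etaU)^-1 *:
     gradU_Ls X H Y mu (Om_ k) (U_ k) (Q_ k) (W_ k) (e1_ k) (e2_ k) (Z1_ k) (Z2_ k)).
Hypothesis Q_update : forall k, Q_ k.+1 = Q_ k - (mu * etaQ)^-1 *:
  gradQ_L H Y delta1 mu (Om_ k) (U_ k.+1) (Q_ k) (W_ k) (e1_ k) (e2_ k) (Z1_ k) (Z2_ k).
Hypothesis W_update : forall k, W_ k.+1 = W_ k - (mu * etaW)^-1 *:
  gradW_L Y delta2 mu (Om_ k) (U_ k.+1) (Q_ k.+1) (W_ k) (e1_ k) (e2_ k) (Z1_ k) (Z2_ k).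
Hypothesis Om_update : forall k Om',
  L (Om_ k.+1) (U_ k.+1) (Q_ k.+1) (W_ k.+1) (e1_ k) (e2_ k) (Z1_ k) (Z2_ k)
  <= L Om' (U_ k.+1) (Q_ k.+1) (W_ k.+1) (e1_ k) (e2_ k) (Z1_ k) (Z2_ k).
Hypothesis e1_update : forall k e,
  L (Om_ k.+1) (U_ k.+1) (Q_ k.+1) (W_ k.+1) (e1_ k.+1) (e2_ k) (Z1_ k) (Z2_ k)
  <= L (Om_ k.+1) (U_ k.+1) (Q_ k.+1) (W_ k.+1) e (e2_ k) (Z1_ k) (Z2_ k).
Hypothesis e2_update : forall k e,
  L (Om_ k.+1) (U_ k.+1) (Q_ k.+1) (W_ k.+1) (e1_ k.+1) (e2_ k.+1) (Z1_ k) (Z2_ k)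
  <= L (Om_ k.+1) (U_ k.+1) (Q_ k.+1) (W_ k.+1) (e1_ k.+1) e (Z1_ k) (Z2_ k).
Hypothesis Z1_update : forall k,
  Z1_ k.+1 = Z1_ k + mu *: res1 (Q_ k.+1) (U_ k.+1) (e1_ k.+1).
Hypothesis Z2_update : forall k,
  Z2_ k.+1 = Z2_ k + mu *: res2 (W_ k.+1) (Q_ k.+1) (U_ k.+1) (e2_ k.+1).

Local Notation Lhalf k := (L (Om_ k.+1) (U_ k.+1) (Q_ k.+1) (W_ k.+1) (e1_ k.+1) (e2_ k.+1)
  (Z1_ k) (Z2_ k)).

Lemma Lag_iterate_step k :
  (forall Om U Q W, L Om U Q W (e1_ k) (e2_ k) (Z1_ k) (Z2_ k) <= L_ k -> penalty U Q W <= M) ->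
  [/\ Z1_ k.+1 = rho1 *: e1_ k.+1, Z2_ k.+1 = rho2 *: e2_ k.+1,
      Lhalf k + (rho1 + mu) / 2 * fsq (e1_ k - e1_ k.+1)
        + (rho2 + mu) / 2 * fsq (e2_ k - e2_ k.+1) <= L_ k
    & L_ k.+1 = Lhalf k + mu * fsq (res1 (Q_ k.+1) (U_ k.+1) (e1_ k.+1))
                + mu * fsq (res2 (W_ k.+1) (Q_ k.+1) (U_ k.+1) (e2_ k.+1))].
Proof.
move=> sublevel.
have step_le (x eta : R) : x / mu < eta -> x <= mu * eta.
  by rewrite ltr_pdivrMr // mulrC => /ltW.
have primal_le := Lag_primal_update_le sublevel (step_le _ _ etaU_gt) (step_le _ _ etaQ_gt)
  (step_le _ _ etaW_gt) (U_update k) (Q_update k) (W_update k) (Om_update k (Om_ k)).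
have [-> -> e_eq Z_eq] := Lag_error_dual_update (e1_ k) (e1_update k) (e2_update k)
  (Z1_update k) (Z2_update k).
by split => //; rewrite e_eq.
Qed.

Lemma Lag_first_iterate : [/\ Z1_ 1 = rho1 *: e1_ 1, Z2_ 1 = rho2 *: e2_ 1 & L_ 1 <= M].
Proof.
have /andP[K_ge0 K_le] := init_level_ge (Om_ 0) (U_ 0) (Q_ 0) (W_ 0) (e1_ 0) (e2_ 0) (Z1_ 0) (Z2_ 0).
set K := L_ 0 + _ in K_ge0 K_le.
have gap_ge0 := dual_gap_ge0 (Z1_ 0) (Z2_ 0).
have [Z1_1 Z2_1 half_le ->] := Lag_iterate_step (k := 0) (fun Om U Q W h =>
  le_trans (penalty_le_Lag _ _ _ _ _ _ _ _) (le_trans (lerD h (lexx _)) K_le)).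
split => //.
have := half_fsq_ge0 (e1_ 0 - e1_ 1) (addr_ge0 (ltW rho1_gt0) (ltW mu_gt0)).
have := half_fsq_ge0 (e2_ 0 - e2_ 1) (addr_ge0 (ltW rho2_gt0) (ltW mu_gt0)).
move=> d2 d1; have half0_le : Lhalf 0 <= L_ 0 by lra.
have := Lag_coercive (Om_ 1) (U_ 1) (Q_ 1) (W_ 1) (e1_ 1) (e2_ 1) (Z1_ 0) (Z2_ 0).
have := penalty_ge0 (U_ 1) (Q_ 1) (W_ 1).
have := half_fsq_ge0 (e1_ 1) (ltW rho1_gt0); have := half_fsq_ge0 (e2_ 1) (ltW rho2_gt0).
move=> e2_ge0 e1_ge0 pen_ge0 coercive.
have e1_le : rho1 / 2 * fsq (e1_ 1) <= K by rewrite /K; lra.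
have e2_le : rho2 / 2 * fsq (e2_ 1) <= K by rewrite /K; lra.
have := fsq_le_of_add_scale_eq mu_gt0 rho1_gt0 e1_le (etrans (esym (Z1_update 0)) Z1_1).
have := fsq_le_of_add_scale_eq mu_gt0 rho2_gt0 e2_le (etrans (esym (Z2_update 0)) Z2_1).
have gap_eq : dual_gap (Z1_ 0) (Z2_ 0) = fsq (Z1_ 0) / (2 * mu) + fsq (Z2_ 0) / (2 * mu).
  by rewrite /dual_gap mulrDl.
have K_eq : K = L_ 0 + dual_gap (Z1_ 0) (Z2_ 0) by [].
rewrite /M /init_level /= -/K; lra.
Qed.

Lemma Lag_iterate_decrease k :
  Z1_ k = rho1 *: e1_ k -> Z2_ k = rho2 *: e2_ k -> L_ k <= M ->
  [/\ Z1_ k.+1 = rho1 *: e1_ k.+1, Z2_ k.+1 = rho2 *: e2_ k.+1 & L_ k.+1 <= L_ k].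
Proof.
move=> Z1_k Z2_k Lk_le.
have sublevel Om U Q W : L Om U Q W (e1_ k) (e2_ k) (Z1_ k) (Z2_ k) <= L_ k ->
    penalty U Q W <= M.
  move=> h; apply: le_trans (Lag_ge_penalty Om U Q W (e1_ k) (e2_ k) rho1_le_mu rho2_le_mu) _.
  by rewrite -Z1_k -Z2_k (le_trans h Lk_le).
have [Z1_k1 Z2_k1 half_le ->] := Lag_iterate_step sublevel.
split => //.
(* the dual ascent is paid for by the error descent: [mu R = rho (e_{k+1} - e_k)] *)
have res_le rho p q (A e e' Z Z' : 'M[R]_(p, q)) : 0 < rho -> 2 * rho ^+ 2 <= mu ^+ 2 ->
    Z' = Z + mu *: A -> Z = rho *: e -> Z' = rho *: e' ->
    mu * fsq A <= (rho + mu) / 2 * fsq (e - e').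
  move=> rho_gt0 rho_mu' Z'_eq Z_eq Z'_eq'; rewrite -opprB fsqN.
  apply: fsq_le_of_scale_eq (ltW rho_gt0) rho_mu' _ => //.
  by rewrite scalerBr -Z_eq -Z'_eq' Z'_eq (addrC Z) addrK.
have := res_le _ _ _ _ _ _ _ _ rho1_gt0 rho1_mu (Z1_update k) Z1_k Z1_k1.
have := res_le _ _ _ _ _ _ _ _ rho2_gt0 rho2_mu (Z2_update k) Z2_k Z2_k1.
lra.
Qed.

Lemma Lag_iterate_invariant k : (0 < k)%N ->
  [/\ Z1_ k = rho1 *: e1_ k, Z2_ k = rho2 *: e2_ k & L_ k <= M].
Proof.
elim: k => [//|[_ _|k IH _]]; first exact: Lag_first_iterate.
have [Z1_k Z2_k Lk_le] := IH isT.
have [Z1_k1 Z2_k1 Lk1_le] := Lag_iterate_decrease Z1_k Z2_k Lk_le.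
by split => //; apply: le_trans Lk1_le Lk_le.
Qed.

Lemma Lag_iterate_ge0 k : (0 < k)%N -> 0 <= L_ k.
Proof.
move/Lag_iterate_invariant => [-> -> _].
exact: le_trans (penalty_ge0 _ _ _) (Lag_ge_penalty _ _ _ _ _ _ rho1_le_mu rho2_le_mu).
Qed.

Lemma Lag_iterate_nonincreasing k : (0 < k)%N -> L_ k.+1 <= L_ k.
Proof.
by move/Lag_iterate_invariant => [Z1_k Z2_k Lk_le]; case: (Lag_iterate_decrease Z1_k Z2_k Lk_le).
Qed.

Lemma Lag_iterates_converge :
  let Lk := fun k : nat => L_ k in
  [/\ (forall k : nat, (1 <= k)%N -> 0 <= Lk k),
      (forall k : nat, (1 <= k)%N -> Lk k.+1 <= Lk k) &
      exists l : R, Lk @ \oo --> l].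
Proof.
split; [exact: Lag_iterate_ge0 | exact: Lag_iterate_nonincreasing |].
have /cvg_ex[l Ll] : cvgn (fun k => L_ k.+1).
  apply: nonincreasing_is_cvgn; first by apply/nonincreasing_seqP => k; apply: Lag_iterate_nonincreasing.
  by exists 0 => _ [k _ <-]; apply: Lag_iterate_ge0.
by exists l; rewrite -cvg_shiftS.
Qed.

End Lagrangian.

Theorem theorem2 (R : realType) (m n r s c : nat)
  (X : 'M[R]_(m, n)) (H : 'M[R]_(s, n)) (Y : 'M[R]_(c, n))
  (lam1 lam2 rho1 rho2 delta1 delta2 mu : R) :
  0 < lam1 -> 0 < lam2 -> 0 < rho1 -> 0 < rho2 ->
  0 < delta1 -> 0 < delta2 -> 0 < mu ->
  Num.sqrt 2 * Num.max rho1 rho2 <= mu ->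
  forall (Om0 : 'M[R]_(r, m)) (U0 : 'M[R]_(r, n)) (Q0 : 'M[R]_(s, r))
    (W0 : 'M[R]_(c, s)) (e10 : 'M[R]_(s, n)) (e20 : 'M[R]_(c, n))
    (Z10 : 'M[R]_(s, n)) (Z20 : 'M[R]_(c, n)),
  exists etaU0 etaQ0 etaW0 : R,
    [/\ 0 < etaU0, 0 < etaQ0, 0 < etaW0 &
    forall etaU etaQ etaW : R,
    etaU0 < etaU -> etaQ0 < etaQ -> etaW0 < etaW ->
    forall (Om : nat -> 'M[R]_(r, m)) (U : nat -> 'M[R]_(r, n))
      (Q : nat -> 'M[R]_(s, r)) (W : nat -> 'M[R]_(c, s))
      (e1 : nat -> 'M[R]_(s, n)) (e2 : nat -> 'M[R]_(c, n))
      (Z1 : nat -> 'M[R]_(s, n)) (Z2 : nat -> 'M[R]_(c, n)),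
    Om 0%N = Om0 -> U 0%N = U0 -> Q 0%N = Q0 -> W 0%N = W0 ->
    e1 0%N = e10 -> e2 0%N = e20 -> Z1 0%N = Z10 -> Z2 0%N = Z20 ->
    (forall k, U k.+1 = softmx (lam1 / (mu * etaU))
       (U k - (mu * etaU)^-1 *:
          gradU_Ls X H Y mu (Om k) (U k) (Q k) (W k) (e1 k) (e2 k) (Z1 k) (Z2 k))) ->
    (forall k, Q k.+1 = Q k - (mu * etaQ)^-1 *:
          gradQ_L H Y delta1 mu (Om k) (U k.+1) (Q k) (W k) (e1 k) (e2 k) (Z1 k) (Z2 k)) ->
    (forall k, W k.+1 = W k - (mu * etaW)^-1 *:
          gradW_L Y delta2 mu (Om k) (U k.+1) (Q k.+1) (W k) (e1 k) (e2 k) (Z1 k) (Z2 k)) ->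
    (forall k (Om' : 'M[R]_(r, m)),
       Lag X H Y lam1 lam2 rho1 rho2 delta1 delta2 mu
         (Om k.+1) (U k.+1) (Q k.+1) (W k.+1) (e1 k) (e2 k) (Z1 k) (Z2 k)
       <= Lag X H Y lam1 lam2 rho1 rho2 delta1 delta2 mu
         Om' (U k.+1) (Q k.+1) (W k.+1) (e1 k) (e2 k) (Z1 k) (Z2 k)) ->
    (forall k (e' : 'M[R]_(s, n)),
       Lag X H Y lam1 lam2 rho1 rho2 delta1 delta2 mu
         (Om k.+1) (U k.+1) (Q k.+1) (W k.+1) (e1 k.+1) (e2 k) (Z1 k) (Z2 k)
       <= Lag X H Y lam1 lam2 rho1 rho2 delta1 delta2 mu
         (Om k.+1) (U k.+1) (Q k.+1) (W k.+1) e' (e2 k) (Z1 k) (Z2 k)) ->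
    (forall k (e' : 'M[R]_(c, n)),
       Lag X H Y lam1 lam2 rho1 rho2 delta1 delta2 mu
         (Om k.+1) (U k.+1) (Q k.+1) (W k.+1) (e1 k.+1) (e2 k.+1) (Z1 k) (Z2 k)
       <= Lag X H Y lam1 lam2 rho1 rho2 delta1 delta2 mu
         (Om k.+1) (U k.+1) (Q k.+1) (W k.+1) (e1 k.+1) e' (Z1 k) (Z2 k)) ->
    (forall k, Z1 k.+1 = Z1 k + mu *: (H - Q k.+1 *m U k.+1 - e1 k.+1)) ->
    (forall k, Z2 k.+1 = Z2 k + mu *: (Y - W k.+1 *m Q k.+1 *m U k.+1 - e2 k.+1)) ->
    let Lk := fun k : nat => Lag X H Y lam1 lam2 rho1 rho2 delta1 delta2 mu
         (Om k) (U k) (Q k) (W k) (e1 k) (e2 k) (Z1 k) (Z2 k) in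
    [/\ (forall k : nat, (1 <= k)%N -> 0 <= Lk k),
        (forall k : nat, (1 <= k)%N -> Lk k.+1 <= Lk k) &
        exists l : R, Lk @ \oo --> l]].
Proof.
move=> lam1_gt0 /ltW lam2_ge0 rho1_gt0 rho2_gt0 delta1_gt0 delta2_gt0 mu_gt0 mu_ge.
move=> Om0 U0 Q0 W0 e10 e20 Z10 Z20.
have /andP[K_ge0 K_le] := init_level_ge X H Y lam1_gt0 lam2_ge0 mu_gt0 rho1_gt0 rho2_gt0
  delta1_gt0 delta2_gt0 Om0 U0 Q0 W0 e10 e20 Z10 Z20.
set M := init_level X H Y lam1 lam2 rho1 rho2 delta1 delta2 mu Om0 U0 Q0 W0 e10 e20 Z10 Z20.
have [stepU_gt0 stepQ_gt0 stepW_gt0] :=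
  step_min_gt0 lam1_gt0 mu_gt0 delta1_gt0 delta2_gt0 (le_trans K_ge0 K_le).
exists (stepU_min delta1 delta2 mu M / mu), (stepQ_min lam1 delta1 delta2 mu M / mu),
  (stepW_min lam1 delta1 delta2 mu M / mu).
split; [exact: divr_gt0 ..|].
move=> etaU etaQ etaW etaU_gt etaQ_gt etaW_gt Om U Q W e1 e2 Z1 Z2.
move=> Om_0 U_0 Q_0 W_0 e1_0 e2_0 Z1_0 Z2_0; subst M Om0 U0 Q0 W0 e10 e20 Z10 Z20.
have rho_mu rho : 0 < rho -> rho <= Num.max rho1 rho2 -> 2 * rho ^+ 2 <= mu ^+ 2.
  move=> rho_gt0 rho_le; apply: (sqrt2_mul_le_sqr (ltW rho_gt0)); apply: (le_trans _ mu_ge).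
  by rewrite ler_pM2l ?sqrtr_gt0.
have rho1_mu : 2 * rho1 ^+ 2 <= mu ^+ 2 by apply: rho_mu; rewrite // le_max lexx.
have rho2_mu : 2 * rho2 ^+ 2 <= mu ^+ 2 by apply: rho_mu; rewrite // le_max lexx orbT.
exact: (Lag_iterates_converge lam1_gt0 lam2_ge0 mu_gt0 rho1_gt0 rho2_gt0 delta1_gt0 delta2_gt0
  rho1_mu rho2_mu etaU_gt etaQ_gt etaW_gt).
Qed.
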